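(* For every integer $k\ge 2$, the class $\mathcal{G}_k$ is closed under taking minors (edge deletions and edge contractions).
   Context: For $n\ge 1$ let $E_n$ be the edge set of $K_n$ and $\mathrm{CUT}_n\subseteq\mathbb{R}^{E_n}$ the cut polytope, i.e. $\mathrm{conv}\{(x_ix_j)_{ij\in E_n}: x\in\{\pm1\}^n\}$. The support graph of a linear inequality $w^Tx\le\alpha$ on $\mathbb{R}^{E_n}$ is $H=(W,F)$ with $F=\{ij: w_{ij}\ne0\}$ and $W$ the set of nodes covered by $F$; the inequality is supported by at most $k$ points if $|W|\le k$. Let $\mathcal{R}_k(K_n)\subseteq\mathbb{R}^{E_n}$ be the polyhedron defined by all inequalities valid for $\mathrm{CUT}_n$ that are supported by at most $k$ points. For a graph $G=([n],E)$, let $\mathrm{CUT}(G)=\pi_E(\mathrm{CUT}_n)$ and $\mathcal{R}_k(G)=\pi_E(\mathcal{R}_k(K_n))$, where $\pi_E$ is the coordinate projection onto $\mathbb{R}^E$. $\mathcal{G}_k$ is the class of all graphs $G$ with $\mathrm{CUT}(G)=\mathcal{R}_k(G)$. *)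

From HB Require Import structures.
From mathcomp Require Import all_boot all_order all_algebra.
From mathcomp Require Import reals.

Set Implicit Arguments.
Unset Strict Implicit.
Unset Printing Implicit Defensive.

Import Order.TTheory GRing.Theory Num.Theory.
Local Open Scope ring_scope.

Definition edge (n : nat) := {p : 'I_n * 'I_n | (p.1 < p.2)%N}.

Definition src n (e : edge n) : 'I_n := (val e).1.
Definition dst n (e : edge n) : 'I_n := (val e).2.

Definition pm (R : numDomainType) (b : bool) : R := if b then 1 else -1.

Definition cutvec (R : numDomainType) n (s : {ffun 'I_n -> bool}) : edge n -> R :=
  fun e => pm R (s (src e)) * pm R (s (dst e)).

Definition CUT (R : numDomainType) n (x : edge n -> R) : Prop :=
  exists lam : {ffun 'I_n -> bool} -> R,
    [/\ forall s, 0 <= lam s,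
        \sum_s lam s = 1
      & forall e, x e = \sum_s lam s * cutvec R s e].

Definition dot (R : numDomainType) n (w x : edge n -> R) : R :=
  \sum_e w e * x e.

Definition valid_cut (R : numDomainType) n (w : edge n -> R) (alpha : R) : Prop :=
  forall x, CUT x -> dot w x <= alpha.

Definition supp_nodes (R : numDomainType) n (w : edge n -> R) : {set 'I_n} :=
  [set i | [exists e, (w e != 0) && ((src e == i) || (dst e == i))]].

Definition Rk (R : numDomainType) (k : nat) n (x : edge n -> R) : Prop :=
  forall (w : edge n -> R) (alpha : R),
    valid_cut w alpha -> (#|supp_nodes w| <= k)%N -> dot w x <= alpha.

(* coordinate projection onto R^E (points of R^E represented by functions
   on all edges of K_n, only the coordinates in E being relevant) *)
Definition proj (R : numDomainType) n (E : {set edge n})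
    (S : (edge n -> R) -> Prop) (y : edge n -> R) : Prop :=
  exists x, S x /\ forall e, e \in E -> x e = y e.

Definition in_Gk (R : numDomainType) (k : nat) n (E : {set edge n}) : Prop :=
  forall y : edge n -> R, proj E (@CUT R n) y <-> proj E (@Rk R k n) y.

(* edge set of the graph on 'I_m obtained by mapping vertices by f
   (used for contractions: loops are dropped, parallel edges merged) *)
Definition image_edges n m (f : 'I_n -> 'I_m) (E : {set edge n}) : {set edge m} :=
  [set e' : edge m | [exists e in E,
     [set f (src e); f (dst e)] == [set src e'; dst e']]].

From HB Require Import structures.
From mathcomp Require Import all_boot all_order all_algebra.
From mathcomp Require Import reals.
From mathcomp Require Import lra.

(* Deletion is immediate: projecting onto fewer coordinates keeps the two
   projections equal.  For the contraction of e0 = uv along f, a point z of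
   R_k(K_m) is lifted to x on K_n by x_e = z_{f(e)}, with x_e = 1 on the
   edges collapsed by f.  A valid inequality w on K_n supported by at most k
   points pushes forward along f to a valid inequality on K_m supported by at
   most k points, so x lies in R_k(K_n) and, G being in G_k, agrees on E with
   a point c of CUT_n.  As c_{e0} = 1, every cut in a convex combination for c
   puts u and v on the same side, hence factors through f; the factored
   combination is a point of CUT_m agreeing with z on the edges of G/e0. *)

Set Implicit Arguments.
Unset Strict Implicit.
Unset Printing Implicit Defensive.
Import Order.TTheory GRing.Theory Num.Theory.
Local Open Scope ring_scope.

Lemma edge_neq n (e : edge n) : src e != dst e.
Proof. by rewrite neq_ltn (valP e). Qed.

Lemma set2_eq_pair (T : finType) (a b c d : T) : c != d ->
  [set a; b] = [set c; d] -> (a = c /\ b = d) \/ (a = d /\ b = c).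
Proof.
move=> ncd H.
have : a \in [set c; d] by rewrite -H set21.
have : b \in [set c; d] by rewrite -H set22.
have : c \in [set a; b] by rewrite H set21.
have : d \in [set a; b] by rewrite H set22.
rewrite !inE; do !case/orP=> /eqP ?; subst; try by [left | right];
  by rewrite eqxx in ncd.
Qed.

Lemma edge_inj n (e e' : edge n) :
  [set src e; dst e] = [set src e'; dst e'] -> e = e'.
Proof.
case/(set2_eq_pair (edge_neq e')) => [[hs hd] | [hs hd]].
  apply: val_inj; move: hs hd; rewrite /src /dst.
  by case: (val e) (val e') => [? ?] [? ?] /= -> ->.
have := valP e; rewrite -/(src e) -/(dst e) hs hd.
by rewrite ltnNge ltnW // (valP e').
Qed.

Definition joins m (i j : 'I_m) (e : edge m) := [set i; j] == [set src e; dst e].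

Lemma joins_loop m (i : 'I_m) (e : edge m) : ~~ joins i i e.
Proof.
rewrite /joins setUid; apply/negP => /eqP H; have := edge_neq e.
have : src e \in [set i] by rewrite H set21.
have : dst e \in [set i] by rewrite H set22.
by rewrite !inE => /eqP-> /eqP->; rewrite eqxx.
Qed.

Lemma joins_pred1 m (i j : 'I_m) (e : edge m) : joins i j e -> joins i j =1 pred1 e.
Proof.
by move=> /eqP H e'; rewrite /joins H; apply/eqP/eqP => [/edge_inj | ->].
Qed.

Lemma exists_joins m (i j : 'I_m) : i != j -> exists e, joins i j e.
Proof.
move=> nij; case: (ltngtP i j) => [lt_ij | lt_ji | /ord_inj eq_ij].
- by exists (exist _ (i, j) lt_ij); rewrite /joins /src /dst /=.
- by exists (exist _ (j, i) lt_ji); rewrite /joins /src /dst /= setUC.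
- by rewrite eq_ij eqxx in nij.
Qed.

Section CutVectors.

Variable R : realDomainType.

Lemma pm_sqr b : pm R b * pm R b = 1.
Proof. by case: b; rewrite /pm ?mulr1 ?mulrNN ?mulr1. Qed.

Lemma pm_mul_le1 a b : pm R a * pm R b <= 1.
Proof. by case: a; case: b; rewrite /pm ?mulr1 ?mulrNN ?mulr1 ?mul1r //; lra. Qed.

Lemma pm_mul_neq a b : a != b -> pm R a * pm R b = -1.
Proof. by case: a; case: b; rewrite /pm ?mulr1 ?mul1r. Qed.

Lemma cutvec_joins n (s : {ffun 'I_n -> bool}) (i j : 'I_n) e :
  joins i j e -> cutvec R s e = pm R (s i) * pm R (s j).
Proof.
move=> /eqP/(set2_eq_pair (edge_neq e)) [[-> ->] | [-> ->]] //.
by rewrite mulrC.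
Qed.

Lemma CUT_cutvec n (s : {ffun 'I_n -> bool}) : CUT (cutvec R s).
Proof.
exists (fun t => (t == s)%:R); split=> [t | | e]; first by rewrite ler0n.
- by rewrite (bigD1 s) //= eqxx big1 ?addr0 // => t /negbTE ->.
- rewrite (bigD1 s) //= eqxx mul1r big1 ?addr0 // => t /negbTE ->.
  by rewrite mul0r.
Qed.

Lemma valid_cutP n (w : edge n -> R) alpha :
  (forall s, dot w (cutvec R s) <= alpha) -> valid_cut w alpha.
Proof.
move=> w_le x [lam [lam0 lam1 xE]].
have -> : dot w x = \sum_s lam s * dot w (cutvec R s).
  rewrite /dot; under eq_bigr do rewrite xE big_distrr.
  rewrite exchange_big; apply: eq_bigr => s _; rewrite big_distrr.
  by apply: eq_bigr => e _ /=; rewrite mulrCA.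
rewrite -[alpha]mul1r -lam1 big_distrl; apply: ler_sum => s _.
exact: ler_wpM2l.
Qed.

Lemma CUT_Rk k n (x : edge n -> R) : CUT x -> Rk k x.
Proof. by move=> Cx w alpha valid_w _; apply: valid_w. Qed.

Lemma proj_CUT_Rk k n (E : {set edge n}) (y : edge n -> R) :
  proj E (@CUT R n) y -> proj E (@Rk R k n) y.
Proof. by case=> x [Cx xy]; exists x; split=> //; apply: CUT_Rk. Qed.

Lemma in_Gk_subset k n (E F : {set edge n}) :
  F \subset E -> in_Gk R k E -> in_Gk R k F.
Proof.
move=> sFE hG y; split; first exact: proj_CUT_Rk.
case=> x [Rx xy].
have [c [Cc cx]] : proj E (@CUT R n) x by apply/hG; exists x.
by exists c; split=> // e Fe; rewrite cx ?xy // (subsetP sFE).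
Qed.

(* The weights vanish on separating cuts because
   \sum_s lam s * (1 - x_s(e0)) = 0 is a sum of nonnegative terms. *)
Lemma convex_cut_edge1 n (lam : {ffun 'I_n -> bool} -> R) (e0 : edge n) :
  (forall s, 0 <= lam s) -> \sum_s lam s = 1 ->
  \sum_s lam s * cutvec R s e0 = 1 ->
  forall s : {ffun 'I_n -> bool}, s (src e0) != s (dst e0) -> lam s = 0.
Proof.
move=> lam0 lam1 lam_e0 s split_s.
have slack_ge0 t : true -> 0 <= lam t * (1 - cutvec R t e0).
  by move=> _; rewrite mulr_ge0 // subr_ge0 pm_mul_le1.
have slack0 : \sum_t lam t * (1 - cutvec R t e0) = 0.
  under eq_bigr do rewrite mulrBr mulr1.
  by rewrite sumrB lam1 lam_e0 subrr.
have /(_ s) := psumr_eq0P slack_ge0 slack0 isT.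
by rewrite /cutvec pm_mul_neq //; lra.
Qed.

End CutVectors.

Section LiftAlongMap.

Variables (R : realDomainType) (n m : nat) (f : 'I_n -> 'I_m).

Definition collapsed (e : edge n) := f (src e) == f (dst e).

(* The sum has at most one term: the edge of K_m joining the images of the
   ends of e, and none when e is collapsed. *)
Definition lift_vec (z : edge m -> R) (e : edge n) : R :=
  (collapsed e)%:R + \sum_(e' | joins (f (src e)) (f (dst e)) e') z e'.

Definition push_ineq (w : edge n -> R) (e' : edge m) : R :=
  \sum_(e | joins (f (src e)) (f (dst e)) e') w e.

Definition collapsed_weight (w : edge n -> R) : R := \sum_(e | collapsed e) w e.

Definition pull_signs (s : {ffun 'I_m -> bool}) : {ffun 'I_n -> bool} :=
  [ffun i => s (f i)].

Lemma lift_vec_collapsed z e : collapsed e -> lift_vec z e = 1.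
Proof.
rewrite /lift_vec => /[dup] /eqP fe ->; rewrite big_pred0 ?addr0 // => e'.
by rewrite fe; apply: negbTE; apply: joins_loop.
Qed.

Lemma lift_vec_joins z e e' :
  joins (f (src e)) (f (dst e)) e' -> lift_vec z e = z e'.
Proof.
move=> je; have /negbTE coll : ~~ collapsed e.
  by apply: contraL je => /eqP->; apply: joins_loop.
by rewrite /lift_vec coll add0r (eq_bigl _ _ (joins_pred1 je)) big_pred1_eq.
Qed.

Lemma lift_vec_cutvec s : lift_vec (cutvec R s) =1 cutvec R (pull_signs s).
Proof.
move=> e; rewrite [RHS]/cutvec !ffunE.
have [/[dup] coll /eqP-> | /exists_joins[e' je]] := boolP (collapsed e).
  by rewrite lift_vec_collapsed // pm_sqr.
by rewrite (lift_vec_joins _ je) (cutvec_joins R s je).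
Qed.

Lemma dot_lift_vec w z :
  dot w (lift_vec z) = collapsed_weight w + dot (push_ineq w) z.
Proof.
rewrite /dot /lift_vec; under eq_bigr do rewrite mulrDr.
rewrite big_split /=; congr (_ + _).
  rewrite /collapsed_weight [RHS]big_mkcond; apply: eq_bigr => e _ /=.
  by case: (collapsed e); rewrite ?mulr1 ?mulr0.
under eq_bigr do rewrite big_distrr big_mkcond.
rewrite exchange_big; apply: eq_bigr => e' _.
by rewrite big_distrl [RHS]big_mkcond.
Qed.

Lemma supp_push_ineq w : (#|supp_nodes (push_ineq w)| <= #|supp_nodes w|)%N.
Proof.
apply: leq_trans (leq_imset_card f _); apply/subset_leq_card/subsetP => i.
rewrite inE => /existsP[e' /andP[nz_e' ie']].
have [e /andP[je nz_e]] : exists e, joins (f (src e)) (f (dst e)) e' && (w e != 0).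
  apply/existsP; apply: contraR nz_e' => /existsPn w0.
  rewrite /push_ineq big1 // => e je.
  by move: (w0 e); rewrite je /= negbK => /eqP.
have ends_supp j : j \in [set src e; dst e] -> j \in supp_nodes w.
  by move=> j_ends; rewrite inE; apply/existsP; exists e;
    rewrite nz_e ![_ == j]eq_sym -in_set2.
have : i \in [set src e'; dst e'] by rewrite in_set2 ![i == _]eq_sym.
rewrite -(eqP je) => /set2P[]->; apply: imset_f; apply: ends_supp;
  by rewrite !inE eqxx ?orbT.
Qed.

Lemma valid_push_ineq w alpha :
  valid_cut w alpha -> valid_cut (push_ineq w) (alpha - collapsed_weight w).
Proof.
move=> valid_w; apply: valid_cutP => s.
have := valid_w _ (CUT_cutvec R (pull_signs s)).
have -> : dot w (cutvec R (pull_signs s)) = dot w (lift_vec (cutvec R s)).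
  by apply: eq_bigr => e _; rewrite lift_vec_cutvec.
by rewrite dot_lift_vec; lra.
Qed.

Lemma Rk_lift_vec k z : Rk k z -> Rk k (lift_vec z).
Proof.
move=> Rz w alpha valid_w supp_w; rewrite dot_lift_vec.
have := Rz _ _ (valid_push_ineq valid_w) (leq_trans (supp_push_ineq w) supp_w).
lra.
Qed.

End LiftAlongMap.

Section Contraction.

Variables (R : realDomainType) (n m : nat) (f : 'I_n -> 'I_m) (e0 : edge n).
Hypothesis f_surj : forall j, exists i, f i = j.
Hypothesis f_eq :
  forall a b, f a = f b <-> (a = b \/ [set a; b] = [set src e0; dst e0]).

Lemma exists_section : exists g : 'I_m -> 'I_n, cancel g f.
Proof.
exists (fun j => odflt (src e0) [pick i | f i == j]) => j.
case: pickP => [i /eqP // | no_i].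
by have [i fi] := f_surj j; move: (no_i i); rewrite fi eqxx.
Qed.

Lemma pull_signs_inj : injective (pull_signs f).
Proof.
have [g gK] := exists_section.
move=> s1 s2 /ffunP s12; apply/ffunP => j.
by have := s12 (g j); rewrite !ffunE gK.
Qed.

Lemma pull_signsP (s : {ffun 'I_n -> bool}) :
  s (src e0) = s (dst e0) -> exists s', s = pull_signs f s'.
Proof.
move=> s_e0; have [g gK] := exists_section.
exists [ffun j => s (g j)]; apply/ffunP => i; rewrite !ffunE.
have [-> // | /(set2_eq_pair (edge_neq e0))] := (f_eq (g (f i)) i).1 (gK (f i)).
by case=> [[-> ->] | [-> ->]].
Qed.

Lemma sum_pull_signs (F : {ffun 'I_n -> bool} -> R) :
  (forall s : {ffun 'I_n -> bool}, s (src e0) != s (dst e0) -> F s = 0) ->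
  \sum_s F s = \sum_s' F (pull_signs f s').
Proof.
move=> F_split.
rewrite (bigID (fun s => s \in pull_signs f @: [set: {ffun 'I_m -> bool}])) /=.
rewrite [X in _ + X]big1 ?addr0; last first.
  move=> s not_pulled; apply: F_split; apply: contra not_pulled => /eqP s_e0.
  by have [s' ->] := pull_signsP s_e0; rewrite imset_f ?inE.
rewrite big_imset /=; last by move=> s1 s2 _ _; apply: pull_signs_inj.
by apply: eq_bigl => s'; rewrite inE.
Qed.

Lemma CUT_contract (c : edge n -> R) : CUT c -> c e0 = 1 ->
  exists c' : edge m -> R, CUT c' /\
    forall e e', joins (f (src e)) (f (dst e)) e' -> c' e' = c e.
Proof.
move=> [lam [lam0 lam1 cE]] c_e0.
have lam_split := convex_cut_edge1 lam0 lam1 (etrans (esym (cE e0)) c_e0).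
exists (fun e' => \sum_s' lam (pull_signs f s') * cutvec R s' e'); split.
  exists (fun s' => lam (pull_signs f s')); split=> //.
  by rewrite -lam1 (sum_pull_signs lam_split).
move=> e e' je; rewrite cE (sum_pull_signs (F := fun s => lam s * _)); last first.
  by move=> s /lam_split->; rewrite mul0r.
by apply: eq_bigr => s' _; rewrite -lift_vec_cutvec (lift_vec_joins _ je).
Qed.

Lemma in_Gk_contract k (E : {set edge n}) :
  e0 \in E -> in_Gk R k E -> in_Gk R k (image_edges f E).
Proof.
move=> E_e0 hG y; split; first exact: proj_CUT_Rk.
case=> z [Rz zy].
have [c [Cc cz]] : proj E (@CUT R n) (lift_vec f z).
  by apply/hG; exists (lift_vec f z); split=> //; apply: Rk_lift_vec.
have c_e0 : c e0 = 1.
  by rewrite cz // lift_vec_collapsed //; apply/eqP/f_eq; right.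
have [c' [Cc' c'c]] := CUT_contract Cc c_e0.
exists c'; split=> // e' /[dup] E'e' /[1!inE] /existsP[e /andP[Ee je]].
by rewrite -zy // (c'c _ _ je) cz // (lift_vec_joins _ je).
Qed.

End Contraction.

Theorem mainTheorem8 (R : realType) (k : nat) (hk : (2 <= k)%N)
    (n : nat) (E : {set edge n}) (hG : in_Gk R k E) :
  (* closed under edge deletion *)
  (forall e, e \in E -> in_Gk R k (E :\ e)) /\
  (* closed under contraction of an edge e0 = uv: f : [n] -> [m] is any
     surjection identifying exactly u and v (a labelling of G / e0) *)
  (forall (e0 : edge n), e0 \in E ->
   forall (m : nat) (f : 'I_n -> 'I_m),
     (forall j, exists i, f i = j) ->
     (forall a b, f a = f b <-> (a = b \/ [set a; b] = [set src e0; dst e0])) ->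
     in_Gk R k (image_edges f E)).
Proof.
split=> [e _ | e0 E_e0 m f f_surj f_eq].
  exact: in_Gk_subset (subD1set E e) hG.
exact: (in_Gk_contract f_surj f_eq E_e0 hG).
Qed.
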